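(* Let $M$ be a module over a commutative ring $A$, and let $A\oplus M$ be the idealization of $M$. Then $\mathfrak{C}(A,A\oplus M)=0$, where $A$ is regarded as a subring of $A\oplus M$ via $a\mapsto(a,0)$.
   Context: The idealization $A\oplus M$ is the ring with underlying group $A\oplus M$ and multiplication $(a,m)(a',m')=(aa',am'+a'm)$. For an extension of rings $A\subseteq B$ and $A$-submodules $L,L'$ of $B$, $LL'$ is the $A$-submodule of finite sums $\sum x_ky_k$. An $A$-submodule $L$ of $B$ is an invertible ideal of $A\subseteq B$ if $LL'=A$ for some $A$-submodule $L'$ of $B$; these form an abelian group $\mathscr{G}(A,B)$ and $\mathfrak{C}(A,B)=\mathscr{G}(A,B)/\{Ax: x\in B^\ast\}$. *)

From HB Require Import structures.
From mathcomp Require Import all_boot all_order all_algebra.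
Set Implicit Arguments. Unset Strict Implicit. Unset Printing Implicit Defensive.
Import GRing.Theory.
Local Open Scope ring_scope.

(* The idealization A (+) M, with underlying additive group A * M
   (componentwise zmodType structure on pairs) and multiplication
   (a,m)(a',m') = (a a', a m' + a' m). *)
Section Idealization.
Variables (A : comPzRingType) (M : lmodType A).

Definition idz_mul (x y : A * M) : A * M :=
  (x.1 * y.1, x.1 *: y.2 + y.1 *: x.2).

Definition idz_one : A * M := (1, 0).

Definition idz_incl (a : A) : A * M := (a, 0).

Definition is_Asubmod (L : A * M -> Prop) : Prop :=
  [/\ L 0,
      (forall x y, L x -> L y -> L (x + y)) &
      (forall (a : A) x, L x -> L (idz_mul (idz_incl a) x))].

Definition mod_prod (L L' : A * M -> Prop) (z : A * M) : Prop :=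
  exists s : seq ((A * M) * (A * M)),
    (forall p, p \in s -> L p.1 /\ L' p.2) /\
    z = \sum_(p <- s) idz_mul p.1 p.2.

Definition base_sub (z : A * M) : Prop := exists a : A, z = idz_incl a.

Definition invertible_ideal (L : A * M -> Prop) : Prop :=
  is_Asubmod L /\
  exists L' : A * M -> Prop, is_Asubmod L' /\
    forall z, mod_prod L L' z <-> base_sub z.

Definition idz_unit (x : A * M) : Prop := exists y, idz_mul x y = idz_one.

Definition principal_sub (x : A * M) (z : A * M) : Prop :=
  exists a : A, z = idz_mul (idz_incl a) x.

Definition trivial_class_group : Prop :=
  forall L : A * M -> Prop, invertible_ideal L ->
    exists x : A * M, idz_unit x /\ forall z, L z <-> principal_sub x z.

End Idealization.

(* Writing 1 = sum_i x_i y_i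
   with x_i in L and y_i in L', put u = sum_i y_i.1 x_i, which lies in L.  For z
   in L each z y_i lies in A, hence equals (z.1 y_i.1, 0), so
   z = sum_i (z y_i) x_i = z.1 u.  Finally u.1 = sum_i x_i.1 y_i.1 = 1, and an
   element of B whose first coordinate is invertible in A is a unit of B. *)
From HB Require Import structures.
From mathcomp Require Import all_boot all_order all_algebra.
Set Implicit Arguments. Unset Strict Implicit. Unset Printing Implicit Defensive.
Import GRing.Theory.
Local Open Scope ring_scope.

Section IdealizationRing.
Variables (A : comPzRingType) (M : lmodType A).

Lemma idz_mulA : associative (@idz_mul A M).
Proof.
move=> [a m] [b n] [c p]; rewrite /idz_mul /=.
by rewrite mulrA !scalerDr !scalerA !addrA (mulrC c a) (mulrC c b).
Qed.

Lemma idz_mulC : commutative (@idz_mul A M).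
Proof. by move=> [a m] [b n]; rewrite /idz_mul /= mulrC addrC. Qed.

Lemma idz_mul1r : left_id (idz_one M) (@idz_mul A M).
Proof. by move=> [a m]; rewrite /idz_mul /= mul1r scale1r scaler0 addr0. Qed.

Lemma idz_mulDl : left_distributive (@idz_mul A M) +%R.
Proof.
move=> [a m] [b n] [c p]; rewrite /idz_mul /= mulrDl scalerDl scalerDr.
by congr (_, _); rewrite addrACA.
Qed.

Definition idealization : Type := (A * M)%type.
HB.instance Definition _ := GRing.Zmodule.on idealization.
HB.instance Definition _ := GRing.Zmodule_isComPzRing.Build idealization
  idz_mulA idz_mulC idz_mul1r idz_mulDl.

Implicit Types (x y z : idealization) (a b : A).
Local Notation incl a := (idz_incl M a : idealization).

Lemma idz_mulE x y : idz_mul x y = x * y.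
Proof. by []. Qed.

Lemma fst_idz_mul x y : (x * y).1 = x.1 * y.1.
Proof. by []. Qed.

Lemma idz_inclM a b : incl (a * b) = incl a * incl b.
Proof. by rewrite -idz_mulE /idz_mul /idz_incl /= !scaler0 addr0. Qed.

Lemma base_subE x : base_sub x -> x = incl x.1.
Proof. by case=> c ->. Qed.

Lemma idz_unit_fst x b : x.1 * b = 1 -> idz_unit x.
Proof.
move=> xb1; exists (b, - (b * b) *: x.2); rewrite /idz_mul /idz_one /= xb1.
by rewrite scalerA mulrN mulrA xb1 mul1r scaleNr addNr.
Qed.

End IdealizationRing.

Section InvertibleIdeals.
Variables (A : comPzRingType) (M : lmodType A).
Implicit Types (x y z : idealization M).
Local Notation incl a := (idz_incl M a : idealization M).

Lemma Asubmod_sum (L : idealization M -> Prop) (I : eqType) (r : seq I)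
    (F : I -> idealization M) :
  is_Asubmod L -> (forall i, i \in r -> L (F i)) -> L (\sum_(i <- r) F i).
Proof. by move=> [L0 LD _] Lr; rewrite big_seq; apply: big_ind. Qed.

Lemma mod_prod_mul (L L' : idealization M -> Prop) x y :
  L x -> L' y -> mod_prod L L' (idz_mul x y).
Proof.
move=> Lx L'y; exists [:: (x, y)]; split; last by rewrite big_seq1.
by move=> p; rewrite inE => /eqP ->.
Qed.

Definition dual_generator (s : seq (idealization M * idealization M)) :
  idealization M := \sum_(p <- s) incl p.2.1 * p.1.

Variable s : seq (idealization M * idealization M).
Hypothesis s_one : \sum_(p <- s) p.1 * p.2 = 1.

Lemma dual_generator_fst : (dual_generator s).1 = 1.
Proof.
rewrite /dual_generator -[RHS]/((1 : idealization M).1) -s_one !raddf_sum.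
by apply: eq_bigr => p _; apply: mulrC.
Qed.

Lemma mem_dual_generator (L : idealization M -> Prop) :
  is_Asubmod L -> (forall p, p \in s -> L p.1) -> L (dual_generator s).
Proof.
move=> Lsub Ls; apply: Asubmod_sum => // p ps.
by case: Lsub => _ _ LZ; apply/LZ/Ls.
Qed.

Lemma dual_generator_generates z :
  (forall p, p \in s -> base_sub (z * p.2)) ->
  z = incl z.1 * dual_generator s.
Proof.
move=> zs; rewrite -[LHS]mulr1 -s_one mulr_sumr /dual_generator mulr_sumr.
rewrite big_seq [RHS]big_seq; apply: eq_bigr => p ps.
by rewrite [RHS]mulrA -idz_inclM -fst_idz_mul -(base_subE (zs p ps)) mulrA mulrAC.
Qed.

End InvertibleIdeals.

Theorem corollary5p12 (A : comPzRingType) (M : lmodType A) :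
  trivial_class_group M.
Proof.
move=> L [Lsub [L' [_ LL'E]]].
have [s [sLL' s_one]] : mod_prod L L' (idz_one M) by apply/LL'E; exists 1.
pose t : seq (idealization M * idealization M) := s.
have t_one : \sum_(p <- t) p.1 * p.2 = 1 := esym s_one.
exists (dual_generator t); split.
  by apply: (idz_unit_fst (b := 1)); rewrite mulr1 dual_generator_fst.
move=> z; split=> [Lz | [a ->]].
  exists z.1; apply: (dual_generator_generates t_one) => p pt.
  by apply/LL'E/mod_prod_mul => //; case: (sLL' p pt).
have [_ _ LZ] := Lsub; apply/LZ/(mem_dual_generator Lsub) => p pt.
by case: (sLL' p pt).
Qed.
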